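(* Let $\lambda \in \Lambda$, $E$ a countable set, $\sigma$ a random virtual permutation of $E$ with law $\mathbb{P}_\lambda$, $C = L \cup \bigcup_k C_k$ and $\mu$ as described in the context, and let $(X_x)_{x \in E}$ be i.i.d. random variables in $C$ with law $\mu$ such that almost surely: $X_x \in L$ iff $x$ is a fixed point of $\sigma$; for distinct $x,y$, $x\sim_\sigma y$ iff $X_x, X_y$ lie on the same circle $C_k$, in which case $\lambda(x) = \lambda(y) = \lambda_k$; and for distinct $x\sim_\sigma y$, $\delta(x,y) = X_y - X_x$ modulo $\lambda(x)$. Then for every finite $I \subset E$ and $x \in I$, almost surely: if $X_x \in L$ then $\sigma_I(x) = x$; if $X_x \in C_k$ for some $k\geq1$, then $\sigma_I(x) = y$ where $X_y$ is the first point of $C_k \cap \{X_z : z \in I\}$ encountered when moving counterclockwise on $C_k$ starting just after $X_x$ (in particular $\sigma_I(x) = x$ if $X_x$ is the only such point).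
   Context: A virtual permutation of a set $E$ is a family $\sigma = (\sigma_I)$ indexed by finite subsets $I\subset E$, $\sigma_I$ a permutation of $I$, with $\sigma_I(x)=\sigma_J^m(x)$ ($m\ge1$ minimal with $\sigma_J^m(x)\in I$) for $I\subset J$; the space carries the $\sigma$-algebra generated by $\sigma\mapsto\sigma_J$. $x\sim_\sigma y$ iff $x,y$ lie in the same cycle of $\sigma_I$ for some (equivalently every) finite $I\ni x,y$; $\mathcal{C}_\sigma(x)$ is the class of $x$; $x$ is a fixed point of $\sigma$ if $\sigma_I(x)=x$ for all finite $I\ni x$. A law is central if each $\sigma_I$ has conjugation-invariant law. Under a central law, $\lambda(x)$ is the $L^1$ limit as $|I|\to\infty$ of $|I\cap\mathcal{C}_\sigma(x)|/|I|$; $\lambda_k$ is the supremum of $\min_{j\le k}\lambda(x_j)$ over pairwise non-equivalent $x_1,\dots,x_k$. $\Lambda$ is the set of non-increasing sequences in $[0,1]$ with sum $\le 1$; $\mathbb{P}_\lambda$ is the unique central measure under which $(\lambda_k)=\lambda$ a.s. For $x\sim_\sigma y$, $k_I(x,y)\in\{0,\dots,|I\cap\mathcal{C}_\sigma(x)|-1\}$ is the integer with $\sigma_I^{k_I(x,y)}(x)=y$, $\Delta(x,y)$ is the $L^1$ limit of $k_I(x,y)/|I|$ and $\delta(x,y)$ its class modulo $\lambda(x)$. The space $C$: for each $k$ with $\lambda_k>0$, a circle $C_k$ of perimeter $\lambda_k$ (pairwise disjoint), with $y-x\in\mathbb{R}/\lambda_k\mathbb{Z}$ the counterclockwise arc length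 from $x$ to $y$; $L$ a disjoint segment of length $1-\sum_k\lambda_k$ (empty if $0$); $C = L\cup\bigcup_k C_k$; $\mu$ the uniform probability measure on $C$ (arc length / length). *)

From HB Require Import structures.
From mathcomp Require Import all_boot all_order all_algebra.
From mathcomp Require Import finmap.
From mathcomp Require Import all_classical all_reals all_analysis.
Set Implicit Arguments. Unset Strict Implicit. Unset Printing Implicit Defensive.
Import Order.TTheory GRing.Theory Num.Theory.
Local Open Scope classical_set_scope.
Local Open Scope fset_scope.
Local Open Scope ring_scope.

(* A virtual permutation is represented as a family indexed by finite   *)
(* subsets I of E: s I : E -> E is a permutation of I (and the identity *)
(* outside I, which is only a normalisation of the representation).     *)

Definition perm_of {E : choiceType} (I : {fset E}) (f : E -> E) : Prop :=
  (forall x, x \notin I -> f x = x) /\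
  {in I, forall x, f x \in I} /\ {in I &, injective f}.

Definition is_vperm {E : choiceType} (s : {fset E} -> E -> E) : Prop :=
  (forall I, perm_of I (s I)) /\
  (forall I J : {fset E}, fsubset I J -> forall x, x \in I ->
     exists m : nat, (0 < m)%N /\ iter m (s J) x \in I /\
       (forall j : nat, (0 < j < m)%N -> iter j (s J) x \notin I) /\
       s I x = iter m (s J) x).

Definition vequiv {E : choiceType} (s : {fset E} -> E -> E) (x y : E) : Prop :=
  exists I : {fset E}, [/\ x \in I, y \in I & exists m : nat, iter m (s I) x = y].

Definition vfixed {E : choiceType} (s : {fset E} -> E -> E) (x : E) : Prop :=
  forall I : {fset E}, x \in I -> s I x = x.

Definition class_card {E : choiceType} (s : {fset E} -> E -> E) (I : {fset E}) (x : E) : nat :=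
  #|` [fset z in I | `[< vequiv s x z >]] |.

(* k_I(x,y): the least m >= 0 with s_I^m(x) = y (for x ~ y, x, y in I,
   this is the unique such m in {0, ..., |I \cap C(x)| - 1}) *)
Definition kI {E : choiceType} (s : {fset E} -> E -> E) (I : {fset E}) (x y : E) : nat :=
  index y (traject (s I) x #|` I|).

Section Random.
Context {R : realType} {d : measure_display} {Omega : measurableType d}
        (P : probability Omega R) {E : choiceType}.

(* s : Omega -> virtual permutation, measurable w.r.t. the sigma-algebra
   generated by the maps sigma |-> sigma_J *)
Definition random_vperm (s : Omega -> {fset E} -> E -> E) : Prop :=
  (forall w, is_vperm (s w)) /\
  (forall (J : {fset E}) (x y : E), measurable [set w | s w J x = y]).

(* central law: each sigma_I has a conjugation-invariant law *)
Definition central (s : Omega -> {fset E} -> E -> E) : Prop :=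
  forall (I : {fset E}) (tau f : E -> E), perm_of I tau ->
    P [set w | forall z, z \in I -> s w I z = f z] =
    P [set w | forall z, z \in I -> s w I (tau z) = tau (f z)].

Definition is_lambda (s : Omega -> {fset E} -> E -> E) (lam : E -> Omega -> R) : Prop :=
  forall x, measurable_fun setT (lam x) /\
    forall e : R, 0 < e -> exists N : nat, forall I : {fset E}, (N <= #|` I|)%N ->
      (\int[P]_w (`| (class_card (s w) I x)%:R / (#|` I|)%:R - lam x w |)%:E
        < e%:E)%E.

Definition is_Delta (s : Omega -> {fset E} -> E -> E) (Delta : E -> E -> Omega -> R) : Prop :=
  forall x y, measurable_fun setT (Delta x y) /\
    forall e : R, 0 < e -> exists N : nat, forall I : {fset E},
      x \in I -> y \in I -> (N <= #|` I|)%N ->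
      (\int[P]_w (if `[< vequiv (s w) x y >]
                  then `| (kI (s w) I x y)%:R / (#|` I|)%:R - Delta x y w |
                  else 0)%:E < e%:E)%E.

End Random.

(* lambda_{n+1}(w) (0-based index n): supremum over pairwise non-equivalent
   x_1, ..., x_{n+1} of min_j lambda(x_j) *)
Definition lamk {E : choiceType} {R : realType} {T : Type}
  (s : T -> {fset E} -> E -> E) (lam : E -> T -> R) (n : nat) (w : T) : R :=
  sup [set m : R | exists xs : 'I_n.+1 -> E,
         (forall i j, i != j -> ~ vequiv (s w) (xs i) (xs j)) /\
         m = \big[Num.min/lam (xs ord0) w]_(i < n.+1) lam (xs i) w].

(* Lambda: non-increasing sequences in [0,1] with sum <= 1
   (0-based: l n stands for lambda_{n+1}) *)
Definition in_Lambda {R : realType} (l : nat -> R) : Prop :=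
  (forall n, 0 <= l n <= 1) /\ (forall n, l n.+1 <= l n) /\
  (forall N, \sum_(i < N) l i <= 1).

(* The space C = L u U_k C_k.  A point is encoded as (c, t) with        *)
(*   c = None     : point of L at abscissa t in [0, 1 - sum_k lambda_k)  *)
(*   c = Some n   : point of the circle C_{n+1} (perimeter l n) at       *)
(*                  counterclockwise arc-coordinate t in [0, l n).       *)

Definition Cmeas {R : realType} (B : set (option nat * R)) : Prop :=
  forall c, measurable [set t : R | B (c, t)].

Definition Llen {R : realType} (l : nat -> R) : \bar R :=
  (1%:E - \sum_(n <oo) (l n)%:E)%E.

Definition muC {R : realType} (l : nat -> R) (B : set (option nat * R)) : \bar R :=
  (lebesgue_measure ([set t : R | B (None, t)] `&` [set t : R | (0 <= t)%R /\ (t%:E < Llen l)%E])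
   + \sum_(n <oo) lebesgue_measure
        ([set t : R | B (Some n, t)] `&` [set t : R | (0 <= t < l n)%R]))%E.

(* counterclockwise arc length from a to b on a circle of perimeter p,
   taken in (0, p] (so that the starting point itself comes last) *)
Definition ccw {R : realType} (p a b : R) : R :=
  if a < b then b - a else b - a + p.

Section IID.
Context {R : realType} {d : measure_display} {Omega : measurableType d}
        (P : probability Omega R) {E : choiceType}.

Definition iid_mu (l : nat -> R) (Xc : E -> Omega -> option nat) (Xt : E -> Omega -> R) : Prop :=
  (forall x B, Cmeas B -> measurable [set w | B (Xc x w, Xt x w)]) /\
  (forall x B, Cmeas B -> P [set w | B (Xc x w, Xt x w)] = muC l B) /\
  (forall (xs : seq E) (B : E -> set (option nat * R)), uniq xs ->
     (forall x, Cmeas (B x)) ->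
     P [set w | forall x, x \in xs -> B x (Xc x w, Xt x w)] =
     (\prod_(x <- xs) P [set w | B x (Xc x w, Xt x w)])%E).

End IID.

From HB Require Import structures.
From mathcomp Require Import all_boot all_order all_algebra.
From mathcomp Require Import finmap.
From mathcomp Require Import all_classical all_reals all_analysis.
From mathcomp Require Import measurable_realfun ring lra zify.
Import Order.TTheory GRing.Theory Num.Theory.
Local Open Scope fset_scope.
Local Open Scope classical_set_scope.
Local Open Scope ring_scope.

(* If [X_x] lies on [L], then [x] is a fixed point of [sigma].  Otherwise [X_x]
   lies on a circle [C_n], together with every [X_z] for [z] in the cycle of
   [x].  Take [J] containing [I] with [|J|] large.  Along the cycle of [x] in
   [sigma_J], the first element of [I] met after [x] is [a = sigma_I x], so
   [0 <= k_J(x, a) <= k_J(x, z) < |J \cap C(x)|] for every other [z] of the cycle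
   in [I]; dividing by [|J|] and passing to the L^1 limits (through convergence
   in probability) gives almost surely [0 <= Delta(x, a) <= Delta(x, z) <= l n].
   As [Delta(x, y)] is congruent to [X_y - X_x] modulo [l n] and, almost surely,
   distinct points have distinct positions, these lifts in [[0, l n]] are the
   counterclockwise arc lengths from [X_x], which are thus minimal at [X_a]. *)

Section almost_sure_inequalities.
Context {R : realType} {d : measure_display} {Omega : measurableType d}
        (P : probability Omega R).
Import HBNNSimple.

Lemma ae_forall_countable {T : countType} {Q : T -> Omega -> Prop} :
  (forall t, {ae P, forall w, Q t w}) -> {ae P, forall w, forall t, Q t w}.
Proof.
move=> aeQ.
have : {ae P, forall w n, if (choice.unpickle n : option T) is Some t then Q t w else True}.
  apply: ae_foralln => n; case: (choice.unpickle n : option T) => [t|]; first exact: aeQ.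
  exact: aeW.
by apply: filterS => w Qw t; have := Qw (choice.pickle t); rewrite choice.pickleK.
Qed.

Lemma ae_of_null (A : set Omega) : measurable A -> P A = 0 -> {ae P, forall w, ~ A w}.
Proof. by move=> mA PA0; exists A; split => // w /= /contrapT. Qed.

Lemma measurable_ler_set (f g : Omega -> R) :
  measurable_fun setT f -> measurable_fun setT g -> measurable [set w | f w <= g w].
Proof.
move=> mf mg; have := measurable_fun_ler mf mg measurableT (Y := [set true]).
by rewrite setTI; apply.
Qed.

(* The integral is bounded below by the simple function [c 1_A], which avoids
   any measurability assumption on [f]. *)
Lemma markov_le {f : Omega -> R} {A : set Omega} {c e : R} :
  measurable A -> 0 < c -> (forall w, 0 <= f w) -> (forall w, A w -> c <= f w) ->
  (\int[P]_w (f w)%:E < (c * e)%:E)%E -> (P A <= e%:E)%E.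
Proof.
move=> mA c0 f0 fA fe.
have cPA : (c%:E * P A <= \int[P]_w (f w)%:E)%E.
  rewrite ge0_integralTE; last by move=> w; rewrite lee_fin.
  pose h := scale_nnsfun (indic_nnsfun R mA) (ltW c0).
  have -> : (c%:E * P A = sintegral P h)%E.
    by rewrite /h /scale_nnsfun /= sintegralrM sintegral_indic.
  apply: ereal_sup_ubound; exists h => //= w; rewrite mindicE.
  by case: (boolP (w \in A)) => [/set_mem /fA|_]; rewrite ?mulr1 ?mulr0 lee_fin.
by move: (le_lt_trans cPA fe); rewrite EFinM lte_pmul2l // => /ltW.
Qed.

Lemma measurable_dev_set {C : set Omega} {f g : Omega -> R} (dl : R) :
  measurable C -> measurable_fun setT f -> measurable_fun setT g ->
  measurable (C `&` [set w | dl <= `|f w - g w|]).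
Proof.
move=> mC mf mg; apply: measurableI => //; apply: measurable_ler_set.
  exact: measurable_cst.
by apply: measurableT_comp => //; exact: measurable_funB.
Qed.

Definition cvg_in_probability_on (C : set Omega) (u : nat -> Omega -> R) (F : Omega -> R) :=
  forall dl e : R, 0 < dl -> 0 < e -> exists N, forall n, (N <= n)%N ->
    (P (C `&` [set w | (dl <= `|u n w - F w|)%R]) <= e%:E)%E.

Lemma cvg_in_probability_cst (C : set Omega) (c : R) :
  cvg_in_probability_on C (fun _ _ => c) (fun _ => c).
Proof.
move=> dl e dl0 e0; exists 0%N => n _.
suff -> : C `&` [set w | (dl <= `|c - c|)%R] = set0 by rewrite measure0 lee_fin ltW.
by apply/seteqP; split => w // [_]; rewrite /= subrr normr0 leNgt dl0.
Qed.

Lemma cvg_in_probability_of_L1 {C : set Omega} {u g : nat -> Omega -> R} {F : Omega -> R} :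
  measurable C -> (forall n, measurable_fun setT (u n)) -> measurable_fun setT F ->
  (forall n w, 0 <= g n w) -> (forall n w, C w -> `|u n w - F w| <= g n w) ->
  (forall e, 0 < e -> exists N, forall n, (N <= n)%N -> (\int[P]_w (g n w)%:E < e%:E)%E) ->
  cvg_in_probability_on C u F.
Proof.
move=> mC mu mF g0 ug L1 dl e dl0 e0.
have [N hN] := L1 (dl * e) (mulr_gt0 dl0 e0); exists N => n Nn.
apply: (markov_le (measurable_dev_set dl mC (mu n) mF) dl0 (g0 n) _ (hN n Nn)).
by move=> w [Cw /le_trans]; apply; exact: ug.
Qed.

Section limits_preserve_order.
Context {C : set Omega} {u v : nat -> Omega -> R} {F G : Omega -> R}.
Hypotheses (mC : measurable C) (mF : measurable_fun setT F) (mG : measurable_fun setT G).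
Hypotheses (mu : forall n, measurable_fun setT (u n)) (mv : forall n, measurable_fun setT (v n)).
Hypotheses (uF : cvg_in_probability_on C u F) (vG : cvg_in_probability_on C v G).
Hypothesis uv : forall n w, C w -> u n w <= v n w.

Let measurable_gap (eps : R) : measurable (C `&` [set w | eps <= F w - G w]).
Proof.
apply: measurableI => //; apply: measurable_ler_set; first exact: measurable_cst.
exact: measurable_funB.
Qed.

(* Since [F - G <= (F - u n) + (v n - G)] on [C], a gap [eps] between [F] and
   [G] forces one of the two deviations to exceed [eps / 2]. *)
Lemma cvg_in_probability_le_null (eps : R) : 0 < eps ->
  P (C `&` [set w | eps <= F w - G w]) = 0.
Proof.
move=> eps0; apply/eqP; rewrite -measure_le0; apply/lee_addgt0Pr => _ /posnumP[e]; rewrite add0e.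
have eps20 : 0 < eps / 2 by rewrite divr_gt0.
have e20 : 0 < e%:num / 2 by rewrite divr_gt0.
have [N1 hN1] := uF _ _ eps20 e20; have [N2 hN2] := vG _ _ eps20 e20.
set n := maxn N1 N2.
set B1 := C `&` [set w | eps / 2 <= `|u n w - F w|].
set B2 := C `&` [set w | eps / 2 <= `|v n w - G w|].
have mB1 : measurable B1 by exact: measurable_dev_set.
have mB2 : measurable B2 by exact: measurable_dev_set.
apply: (@le_trans _ _ (P (B1 `|` B2))).
  apply: le_measure; rewrite ?inE //; first exact: measurableU.
  move=> w [Cw /= Bw]; have := uv n w Cw.
  case: (lerP (eps / 2) `|u n w - F w|) => [|uFw vw]; first by left.
  right; split => //=; have := ler_norm (v n w - G w); move: uFw.
  rewrite ltr_norml; lra.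
apply: (le_trans (measureU2 _ mB1 mB2)).
rewrite [e%:num]splitr EFinD.
by apply: leeD; [exact: hN1 (leq_maxl _ _) | exact: hN2 (leq_maxr _ _)].
Qed.

Lemma ae_le_of_cvg_in_probability : {ae P, forall w, C w -> F w <= G w}.
Proof.
have : {ae P, forall w m, ~ (C `&` [set w | m.+1%:R^-1 <= F w - G w]) w}.
  apply: ae_foralln => m; apply: ae_of_null; first exact: measurable_gap.
  by apply: cvg_in_probability_le_null; rewrite invr_gt0 ltr0n.
apply: filterS => w gap Cw; rewrite leNgt; apply/negP => /ltr_add_invr[m].
by move=> GF; apply: (gap m); split => //=; rewrite lerBrDr addrC ltW.
Qed.

End limits_preserve_order.
End almost_sure_inequalities.

Section events_of_restriction.
Context {R : realType} {d : measure_display} {Omega : measurableType d}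
        {E : countType} (s : Omega -> {fset E} -> E -> E) (J : {fset E}).
Hypothesis s_id : forall w z, z \notin J -> s w J z = z.
Hypothesis s_meas : forall z y, measurable [set w | s w J z = y].

Lemma measurable_map_restriction (zs ys : seq E) :
  measurable [set w | map (s w J) zs = ys].
Proof.
elim: zs ys => [|z zs IH] [|y ys] /=.
- by rewrite [X in measurable X](_ : _ = setT) //; apply/seteqP; split.
- by rewrite [X in measurable X](_ : _ = set0) //; apply/seteqP; split.
- by rewrite [X in measurable X](_ : _ = set0) //; apply/seteqP; split.
rewrite [X in measurable X](_ : _ = [set w | s w J z = y] `&` [set w | map (s w J) zs = ys]).
  exact: measurableI.
by apply/seteqP; split => w /= => [[-> ->]|[-> ->]].
Qed.

(* [s w J] is determined by the countably many possible values of its graph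
   on [J], so any event it determines is a countable union of measurable sets. *)
Lemma measurable_restriction_event (Q : (E -> E) -> Prop) :
  measurable [set w | Q (s w J)].
Proof.
pose g (ys : seq E) z := if z \in J then nth z ys (index z (J : seq E)) else z.
have gK w : g (map (s w J) J) = s w J.
  apply: funext => z; rewrite /g; case: ifPn => zJ; last by rewrite s_id.
  rewrite (set_nth_default (s w J z)); last by rewrite size_map index_mem.
  by rewrite (nth_map z) ?index_mem // nth_index.
rewrite [X in measurable X](_ : _ =
    \bigcup_(ys : seq E) [set w | Q (g ys) /\ map (s w J) (J : seq E) = ys]).
  apply: countable_bigcupT_measurable; first exact: countableP.
  move=> ys; have [Qg|nQg] := pselect (Q (g ys)).
    rewrite [X in measurable X](_ : _ = [set w | map (s w J) (J : seq E) = ys]).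
      exact: measurable_map_restriction.
    by apply/seteqP; split => w /= => [[]|].
  by rewrite [X in measurable X](_ : _ = set0) //; apply/seteqP; split => w /= [].
apply/seteqP; split => w /= => [Qw|[ys _ [Qg sJ]]]; last by rewrite -gK sJ.
by exists (map (s w J) J) => //; rewrite gK.
Qed.

Lemma measurable_fun_restriction (h : (E -> E) -> R) :
  measurable_fun setT (fun w => h (s w J)).
Proof.
by move=> _ Y _; rewrite setTI; exact: (measurable_restriction_event (fun f => Y (h f))).
Qed.

End events_of_restriction.

Section finite_permutations.
Context {E : choiceType} {J : {fset E}} {f : E -> E}.
Hypothesis f_perm : perm_of J f.
Local Open Scope nat_scope.

Lemma iter_perm_mem {x} m : x \in J -> iter m f x \in J.
Proof. by have [_ [fJ _]] := f_perm; move=> xJ; elim: m => //= m IH; exact: fJ. Qed.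

Lemma iter_perm_cancel {x i j} : x \in J -> i <= j ->
  iter i f x = iter j f x -> iter (j - i) f x = x.
Proof.
have [_ [_ f_inj]] := f_perm; move=> xJ.
elim: i j => [|i IH] [|j] // ij; rewrite ?subn0 //= => /f_inj fij.
by rewrite subSS; apply: IH => //; apply: fij; exact: iter_perm_mem.
Qed.

Lemma iter_perm_period {x} : x \in J ->
  exists p, [/\ 0 < p, p <= #|` J| & iter p f x = x].
Proof.
move=> xJ; have : ~~ uniq (traject f x #|` J|.+1).
  apply/negP => u; suff : #|` J|.+1 <= #|` J| by rewrite ltnn.
  rewrite -[X in X <= _](size_traject f x); apply: (uniq_leq_size u).
  by move=> y /trajectP [i _ ->]; exact: iter_perm_mem.
move=> /(uniqPn x) [i [j [ij]]]; rewrite size_traject => jlt.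
rewrite !nth_traject ?(ltn_trans ij) // => /(iter_perm_cancel xJ (ltnW ij)) fji.
by exists (j - i); split => //; lia.
Qed.

Lemma iter_modn {x p} m : iter p f x = x -> iter m f x = iter (m %% p) f x.
Proof. by move=> fpx; rewrite {1}(divn_eq m p) addnC iterD iterM (iter_fix _ fpx). Qed.

Lemma index_leq (T : eqType) (ys : seq T) y i : nth y ys i = y -> index y ys <= i.
Proof.
by move=> yi; rewrite leqNgt; apply/negP => /(before_find y); rewrite yi /= eqxx.
Qed.

(* Minimality of the index forces the first [k + 1] points of the orbit to be
   distinct. *)
Lemma index_traject_perm {x y m} : x \in J -> iter m f x = y ->
  let k := index y (traject f x #|` J|) in
  [/\ iter k f x = y, k < #|` J| & uniq (traject f x k.+1)].
Proof.
move=> xJ fmx k.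
have [p [p0 pJ fpx]] := iter_perm_period xJ.
have y_in : y \in traject f x #|` J|.
  apply/trajectP; exists (m %% p); last by rewrite -(iter_modn _ fpx).
  by apply: leq_trans pJ; rewrite ltn_mod.
have kJ : k < #|` J| by rewrite -[X in _ < X](size_traject f x) index_mem.
have fkx : iter k f x = y by rewrite -(nth_traject f kJ) nth_index.
split => //; apply/negP => /negP /(uniqPn x) [i [j [ij]]]; rewrite size_traject => jk.
rewrite !nth_traject ?(ltn_trans ij) // => /(iter_perm_cancel xJ (ltnW ij)) fq.
have q0 : 0 < j - i by lia.
have : k <= k %% (j - i).
  have kq : k %% (j - i) < #|` J| by apply: leq_ltn_trans kJ; apply: leq_mod.
  apply: index_leq; rewrite (set_nth_default x) ?size_traject // nth_traject //.
  by rewrite -(iter_modn _ fq).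
have : k %% (j - i) < j - i by rewrite ltn_mod.
lia.
Qed.

End finite_permutations.

Section virtual_permutations.
Context {E : choiceType} {s : {fset E} -> E -> E}.
Hypothesis s_vperm : is_vperm s.
Local Open Scope nat_scope.

Let s_perm I : perm_of I (s I) := s_vperm.1 I.

Lemma orbit_restriction_sub {I K : {fset E}} {x} m : fsubset I K -> x \in I ->
  exists m', iter m (s I) x = iter m' (s K) x.
Proof.
move=> IK xI; elim: m => [|m [m' IH]]; first by exists 0.
have [m1 [_ [_ [_ sIy]]]] := s_vperm.2 I K IK _ (iter_perm_mem (s_perm I) m xI).
by exists (m1 + m'); rewrite iterS sIy iterD -IH.
Qed.

(* Induction on the length of the [s K]-path, which first returns to [I] at
   [s I x]. *)
Lemma orbit_restriction_sup {I K : {fset E}} {x z m} : fsubset I K -> x \in I -> z \in I ->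
  iter m (s K) x = z -> exists m', iter m' (s I) x = z.
Proof.
move=> IK; elim: m {-2}m (leqnn m) x => [|n IH] m mn x xI zI fmx.
  by exists 0; move: mn fmx; rewrite leqn0 => /eqP ->.
have [m1 [m1_gt0 [m1I [m1_first sIx]]]] := s_vperm.2 I K IK x xI.
case: (ltnP m m1) => [mm1|m1m].
  case: m mn fmx mm1 => [|m] _ fmx mm1; first by exists 0.
  by move: (m1_first m.+1 mm1); rewrite fmx zI.
have sIxI : s I x \in I by rewrite sIx.
have [m' fm'] := IH (m - m1) ltac:(lia) (s I x) sIxI zI ltac:(by rewrite sIx -iterD subnK).
by exists m'.+1; rewrite iterSr.
Qed.

Lemma vequiv_iter {I : {fset E}} {x z} : vequiv s x z -> x \in I -> z \in I ->
  exists m, iter m (s I) x = z.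
Proof.
move=> [J [xJ zJ [m fmx]]] xI zI.
have [m' fm'] := orbit_restriction_sub m (fsubsetUr I J) xJ.
by apply: (orbit_restriction_sup (fsubsetUl I J) xI zI (m := m')); rewrite -fm'.
Qed.

Lemma kI_lt_class_card {J : {fset E}} {x y m} : x \in J -> iter m (s J) x = y ->
  kI s J x y < class_card s J x.
Proof.
move=> xJ fmx; have [_ _ k_uniq] := index_traject_perm (s_perm J) xJ fmx.
rewrite /class_card -(size_traject (s J) x (kI s J x y).+1).
apply: (uniq_leq_size k_uniq) => z /trajectP [i _ ->].
rewrite !inE /= iter_perm_mem ?s_perm //; apply/asboolP.
by exists J; split => //; [exact: iter_perm_mem | exists i].
Qed.

Lemma class_card_orbit {J : {fset E}} {x} : x \in J ->
  class_card s J x = #|` [fset z in J | `[< exists m, iter m (s J) x = z >]]|.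
Proof.
move=> xJ; congr #|` _|; apply/fsetP => z; rewrite !inE; case: (boolP (z \in J)) => //= zJ.
apply/asboolP/asboolP => [xz|[m fmx]]; first exact: vequiv_iter.
by exists J; split => //; exists m.
Qed.

(* On the cycle of [x] in [J], the first point of [I] after [x] is [s I x]. *)
Lemma kI_first_return {I J : {fset E}} {x b} : fsubset I J -> x \in I ->
  b \in I -> b != x -> (exists m, iter m (s J) x = b) ->
  kI s J x (s I x) <= kI s J x b.
Proof.
move=> IJ xI bI bx [m fmx].
have xJ : x \in J by move/fsubsetP: IJ; apply.
have [fkx kJ _] := index_traject_perm (s_perm J) xJ fmx.
have [m1 [_ [_ [m1_first sIx]]]] := s_vperm.2 I J IJ x xI.
rewrite -/(kI s J x b) in fkx kJ; move: (kI s J x b) fkx kJ => k fkx kJ.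
have m1k : m1 <= k.
  rewrite leqNgt; apply/negP => km1.
  case: k fkx kJ km1 => [|k] fkx _ km1; first by move: bx; rewrite -fkx eqxx.
  by move: (m1_first k.+1 km1); rewrite fkx bI.
apply: (leq_trans _ m1k); apply: index_leq.
rewrite (set_nth_default x) ?size_traject ?(leq_ltn_trans m1k) //.
by rewrite nth_traject ?(leq_ltn_trans m1k) // sIx.
Qed.

End virtual_permutations.

Section iid_points.
Context {R : realType} {d : measure_display} {Omega : measurableType d}
        (P : probability Omega R) {E : countType} {l : nat -> R}
        {Xc : E -> Omega -> option nat} {Xt : E -> Omega -> R}.
Hypothesis X_iid : iid_mu P l Xc Xt.

Let lebesgue0 (A : set R) : (forall t, ~ A t) -> lebesgue_measure A = 0%E.
Proof. by move=> A0; rewrite (_ : A = set0) ?measure0 //; apply/seteqP; split. Qed.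

Lemma ae_Xt_range (y : E) :
  {ae P, forall w, forall n, Xc y w = Some n -> 0 <= Xt y w < l n}.
Proof.
have [X_meas [X_law _]] := X_iid.
pose B (ct : option nat * R) := if ct.1 is Some n then ~ (0 <= ct.2 < l n) else False.
have mB : Cmeas B.
  move=> [n|] /=; last exact: measurable0.
  rewrite (_ : [set t | _] = ~` [set` `[0, l n[%R]).
    by apply: measurableC; exact: measurable_itv.
  by apply/seteqP; split => t /=; rewrite in_itv.
have PB : P [set w | B (Xc y w, Xt y w)] = 0%E.
  rewrite X_law // /muC lebesgue0 ?add0e; last by move=> t [].
  by apply: eseries0 => i _ _; apply: lebesgue0 => t [/= nt]; exact: nt.
apply: filterS (ae_of_null P _ (X_meas y B mB) PB) => w nB n Xyw.
by apply: contrapT => out; apply: nB; rewrite /B /= Xyw.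
Qed.

Let cell (n : nat) (dl : R) (j : nat) (ct : option nat * R) : Prop :=
  ct.1 = Some n /\ j%:R * dl <= ct.2 < j.+1%:R * dl.

Let cell_slice n dl j :
  [set t | cell n dl j (Some n, t)] = [set` `[j%:R * dl, j.+1%:R * dl[%R].
Proof. by apply/seteqP; split => t /=; rewrite in_itv /=; [case=> _ | split]. Qed.

Let cell_meas n dl j : Cmeas (cell n dl j).
Proof.
move=> c; have [->|cn] := pselect (c = Some n).
  by rewrite cell_slice; exact: measurable_itv.
by rewrite (_ : [set t | _] = set0) //; apply/seteqP; split => t // [].
Qed.

(* Only the circle [C_n] contributes to [mu (cell n dl j)]. *)
Let muC_cell n dl j : 0 < dl -> (muC l (cell n dl j) <= dl%:E)%E.
Proof.
move=> dl0; rewrite /muC lebesgue0 ?add0e; last by move=> t [[]].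
rewrite (nneseries_split 0 n.+1); last by move=> k _; exact: measure_ge0.
rewrite add0n [X in (_ + X)%E]eseries0 ?adde0; last first.
  by move=> i ni _; apply: lebesgue0 => t [[/= [] ni0] _] _; move: ni; rewrite ni0 ltnn.
rewrite big_mkord big_ord_recr /= big1 ?add0e; last first.
  by move=> i _; apply: lebesgue0 => t [[/= [] ni]] _ _; move: (ltn_ord i); rewrite ni ltnn.
apply: (@le_trans _ _ (lebesgue_measure [set t | cell n dl j (Some n, t)])).
  apply: le_measure; rewrite ?inE; last by move=> t [].
  - apply: measurableI; first by rewrite cell_slice; exact: measurable_itv.
    rewrite (_ : [set t | _] = [set` `[0, l n[%R]); first exact: measurable_itv.
    by apply/seteqP; split => t /=; rewrite in_itv.
  - by rewrite cell_slice; exact: measurable_itv.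
rewrite cell_slice lebesgue_measure_itv /= lte_fin ltr_pM2r // ltr_nat ltnSn.
by rewrite -EFinB -mulrBl -natrB // subSnn mul1r.
Qed.

Section distinct_points.
Variables (x y : E) (n : nat).
Hypothesis xy : x != y.

Let both_in (A : option nat * R -> Prop) :=
  [set w | forall z, z \in [:: x; y] -> A (Xc z w, Xt z w)].

Let both_in_meas {A : option nat * R -> Prop} : Cmeas A -> measurable (both_in A).
Proof.
have [X_meas _] := X_iid; move=> mA.
rewrite (_ : both_in A = [set w | A (Xc x w, Xt x w)] `&` [set w | A (Xc y w, Xt y w)]).
  by apply: measurableI; exact: X_meas.
apply/seteqP; split => w /= => [Aw|[Ax Ay] z]; last by rewrite !inE => /orP[] /eqP ->.
by split; apply: Aw; rewrite !inE eqxx ?orbT.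
Qed.

Let both_in_cell_le dl j : 0 < dl -> (P (both_in (cell n dl j)) <= (dl * dl)%:E)%E.
Proof.
have [_ [X_law X_indep]] := X_iid; move=> dl0.
rewrite /both_in (X_indep [:: x; y] (fun _ => cell n dl j)) //=; last by rewrite inE xy.
rewrite big_cons big_cons big_nil mule1 EFinM.
by apply: lee_pmul => //; rewrite X_law //; exact: muC_cell.
Qed.

Let same_point := [set w | Xc x w = Some n /\ Xc y w = Some n /\ Xt x w = Xt y w].

Let same_point_meas : measurable same_point.
Proof.
have [X_meas _] := X_iid.
have mXt z : measurable_fun setT (Xt z).
  by move=> _ Y mY; rewrite setTI; exact: (X_meas z (fun ct => Y ct.2) (fun _ => mY)).
have mXc z : measurable [set w | Xc z w = Some n].
  apply: (X_meas z (fun ct => ct.1 = Some n)) => c.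
  have [->|cn] := pselect (c = Some n).
    by rewrite (_ : [set t | _] = setT) //; apply/seteqP; split.
  by rewrite (_ : [set t | _] = set0) //; apply/seteqP; split => t.
rewrite (_ : same_point = [set w | Xc x w = Some n] `&` ([set w | Xc y w = Some n] `&`
    ([set w | Xt x w <= Xt y w] `&` [set w | Xt y w <= Xt x w]))).
  by do 3?apply: measurableI => //; exact: measurable_ler_set.
apply/seteqP; split => w /= => [[-> [-> ->]]|[Xxn [Xyn [xy_le yx_le]]]].
  by rewrite lexx.
by do 2!split => //; apply/eqP; rewrite eq_le xy_le yx_le.
Qed.

(* Cover the circle by [K] cells of length [dl]: the two independent points
   fall in a common cell with probability at most [K dl^2 <= dl (l n + dl)]. *)
Let same_point_le {dl} : 0 < dl -> 0 <= l n ->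
  (P same_point <= (dl * (l n + dl))%:E)%E.
Proof.
move=> dl0 ln0; have [N [mN PN0 rangeN]] := ae_Xt_range x.
set K := (Num.truncn (l n / dl)).+1.
have cover : same_point `<=` N `|` \big[setU/set0]_(j < K) both_in (cell n dl j).
  move=> w [Xxn [Xyn Xxy]]; have [Nw|nNw] := pselect (N w); first by left.
  have /andP[t0 tl] : 0 <= Xt x w < l n.
    apply: contrapT => out; apply: nNw; apply: rangeN => /(_ n Xxn); exact: out.
  have tdl0 : 0 <= Xt x w / dl by rewrite divr_ge0 // ltW.
  have /andP[j1 j2] := truncn_itv tdl0.
  rewrite -(bigcup_mkord K (fun j => both_in (cell n dl j))); right.
  exists (Num.truncn (Xt x w / dl)).
    by rewrite /= /K ltnS le_truncn // ler_pM2r ?invr_gt0 // ltW.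
  move=> z; rewrite !inE => /orP[] /eqP ->; split; rewrite /= -?Xxy //.
    by rewrite -ler_pdivlMr // -ltr_pdivrMr // j1 j2.
  by rewrite -ler_pdivlMr // -ltr_pdivrMr // j1 j2.
have mU : measurable (\big[setU/set0]_(j < K) both_in (cell n dl j)).
  by apply: bigsetU_measurable => j _; exact: both_in_meas (cell_meas n dl j).
apply: (le_trans (le_measure _ _ _ cover)); rewrite ?inE //; first exact: measurableU.
apply: (le_trans (measureU2 _ mN mU)).
rewrite [X in (X + _ <= _)%E](_ : _ = 0%E) ?add0e; last exact: PN0.
apply: (le_trans (content_subadditive P (F := fun j => both_in (cell n dl j)) (n := K)
  (fun j _ => both_in_meas (cell_meas n dl j)) mU (fun w Uw => Uw))).
apply: le_trans; first by apply: lee_sum => j _; exact: both_in_cell_le.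
rewrite sumEFin lee_fin sumr_const card_ord -mulr_natl.
have K_le : K%:R <= l n / dl + 1.
  by rewrite /K -addn1 natrD lerD2r truncn_le divr_ge0 // ltW.
apply: (le_trans (ler_wpM2r (mulr_ge0 (ltW dl0) (ltW dl0)) K_le)).
by rewrite [leRHS](_ : _ = (l n / dl + 1) * (dl * dl)) //; field; rewrite gt_eqF.
Qed.

Lemma ae_Xt_neq : 0 <= l n ->
  {ae P, forall w, ~ (Xc x w = Some n /\ Xc y w = Some n /\ Xt x w = Xt y w)}.
Proof.
move=> ln0; apply: (ae_of_null P _ same_point_meas).
apply/eqP; rewrite -measure_le0; apply/lee_addgt0Pr => _ /posnumP[e]; rewrite add0e.
set dl := Num.min 1 (e%:num / (l n + 1)).
have ln1 : 0 < l n + 1 by rewrite ltr_wpDl.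
have dl0 : 0 < dl by rewrite lt_min ltr01 divr_gt0.
have dl1 : dl <= 1 by rewrite ge_min lexx.
have dle : dl * (l n + 1) <= e%:num by rewrite -ler_pdivlMr // ge_min lexx orbT.
apply: (le_trans (same_point_le dl0 ln0)); rewrite lee_fin.
by apply: le_trans dle; apply: ler_wpM2l; [exact: ltW | rewrite lerD2l].
Qed.

End distinct_points.
End iid_points.

Section counterclockwise_arcs.
Context {R : realType}.
Implicit Types (p X A Z a : R) (k : int).

Definition arc_lift p X A a := exists k, a - (A - X) = k%:~R * p.

Lemma intmul_small_eq0 {p k} : `|k%:~R * p| < p -> k = 0.
Proof.
move=> kp; have p0 : 0 < p by apply: le_lt_trans kp.
move: kp; rewrite normrM (gtr0_norm p0) gtr_pMl // -intr_norm ltrz1 => k1; lia.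
Qed.

Lemma ccw_itv {p X A} : 0 <= X < p -> 0 <= A < p -> 0 < ccw p X A <= p.
Proof.
move=> /andP[? ?] /andP[? ?]; rewrite /ccw.
by case: (ltP X A) => ?; apply/andP; split; lra.
Qed.

Lemma arc_lift_ccw p X A : arc_lift p X A (ccw p X A).
Proof.
rewrite /ccw; case: (ltP X A) => _; [exists 0 | exists 1]; rewrite ?mul0r ?mul1r; lra.
Qed.

Lemma arc_lift_eq_ccw {p X A a} : 0 <= X < p -> 0 <= A < p -> 0 < a <= p ->
  arc_lift p X A a -> a = ccw p X A.
Proof.
move=> X_itv A_itv /andP[a0 ap] [k ak]; have [k' ck'] := arc_lift_ccw p X A.
have /andP[c0 cp] := ccw_itv X_itv A_itv.
have diff : a - ccw p X A = (k - k')%:~R * p by rewrite intrB mulrBl -ak -ck'; ring.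
suff kk : k - k' = 0 by apply/eqP; rewrite -subr_eq0 diff kk mul0r.
by apply: (@intmul_small_eq0 p); rewrite -diff ltr_norml; apply/andP; lra.
Qed.

Lemma arc_lift_neq0 {p X A a} : 0 <= X < p -> 0 <= A < p -> A != X ->
  arc_lift p X A a -> a != 0.
Proof.
move=> /andP[? ?] /andP[? ?] AX [k ak]; apply: contraNneq AX => a0.
have k0 : k = 0 by apply: (@intmul_small_eq0 p); rewrite -ak a0 ltr_norml; apply/andP; lra.
by move: ak; rewrite a0 k0 mul0r; lra.
Qed.

Lemma ccw_le_of_arc_lifts {p X A Z a z} : 0 <= X < p -> 0 <= A < p -> 0 <= Z < p ->
  A != X -> 0 <= a -> a <= z -> z <= p ->
  arc_lift p X A a -> arc_lift p X Z z -> ccw p X A <= ccw p X Z.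
Proof.
move=> X_itv A_itv Z_itv AX a0 az zp liftA liftZ.
have a_gt0 : 0 < a by rewrite lt_def (arc_lift_neq0 X_itv A_itv AX liftA).
rewrite -(arc_lift_eq_ccw X_itv A_itv _ liftA) -?(arc_lift_eq_ccw X_itv Z_itv _ liftZ) //.
  by apply/andP; split; [exact: lt_le_trans az | ].
by apply/andP; split; [ | exact: le_trans zp].
Qed.

Lemma ccw_le_ccw_self {p X A} : 0 <= X < p -> 0 <= A < p -> ccw p X A <= ccw p X X.
Proof. by move=> /andP[? ?] /andP[? ?]; rewrite /ccw ltxx; case: (ltP X A); lra. Qed.

End counterclockwise_arcs.

Section first_return_arcs.
Context {R : realType} {d : measure_display} {Omega : measurableType d}
        (P : probability Omega R) {E : countType} {s : Omega -> {fset E} -> E -> E}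
        {lam : E -> Omega -> R} {Delta : E -> E -> Omega -> R}.
Hypotheses (s_rand : random_vperm s) (lam_lim : is_lambda P s lam)
           (Delta_lim : is_Delta P s Delta).
Context {I : {fset E}} {J : nat -> {fset E}} {x : E}.
Hypotheses (IJ : forall n, fsubset I (J n)) (cardJ : forall n, (n <= #|` J n|)%N)
           (xI : x \in I).

Let s_vperm w : is_vperm (s w) := s_rand.1 w.

Let event_meas K (Q : (E -> E) -> Prop) : measurable [set w | Q (s w K)].
Proof.
apply: measurable_restriction_event (s_rand.2 K) Q => w z.
exact: ((s_vperm w).1 K).1.
Qed.

Let fun_meas K (h : (E -> E) -> R) : measurable_fun setT (fun w => h (s w K)).
Proof.
apply: measurable_fun_restriction (s_rand.2 K) h => w z.
exact: ((s_vperm w).1 K).1.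
Qed.

Let xJ n : x \in J n := fsubsetP (IJ n) x xI.

Let orbit_mem w m : iter m (s w I) x \in I := iter_perm_mem ((s_vperm w).1 I) m xI.

Let k_ratio (y : E) n w : R := (kI (s w) (J n) x y)%:R / (#|` J n|)%:R.

Let card_ratio n w : R := (class_card (s w) (J n) x)%:R / (#|` J n|)%:R.

Let k_ratio_meas y n : measurable_fun setT (k_ratio y n).
Proof. exact: (fun_meas (J n) (fun f => (index y (traject f x #|` J n|))%:R / _)). Qed.

Let card_ratio_meas n : measurable_fun setT (card_ratio n).
Proof.
rewrite /card_ratio; under eq_fun do rewrite class_card_orbit ?xJ //.
exact: (fun_meas (J n) (fun f => #|` [fset z in J n | `[< exists m, iter m f x = z >]]|%:R / _)).
Qed.

Let k_ratio_cvg {y} {C : set Omega} : y \in I -> measurable C ->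
  (forall w, C w -> vequiv (s w) x y) -> cvg_in_probability_on P C (k_ratio y) (Delta x y).
Proof.
move=> yI mC Cxy; have yJ n : y \in J n := fsubsetP (IJ n) y yI.
pose g n w := if `[< vequiv (s w) x y >] then `|k_ratio y n w - Delta x y w| else 0.
apply: (cvg_in_probability_of_L1 P (g := g) mC (k_ratio_meas y) (Delta_lim x y).1).
- by move=> n w; rewrite /g; case: ifP.
- by move=> n w /Cxy xy; rewrite /g asboolT.
move=> e e0; have [N hN] := (Delta_lim x y).2 e e0.
by exists N => n Nn; apply: hN; [exact: xJ | exact: yJ | exact: leq_trans Nn (cardJ n)].
Qed.

Let card_ratio_cvg {C : set Omega} : measurable C ->
  cvg_in_probability_on P C card_ratio (lam x).
Proof.
move=> mC; apply: (cvg_in_probability_of_L1 P mC card_ratio_meas (lam_lim x).1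
  (fun n w => normr_ge0 _) (fun n w _ => lexx _)) => e e0; have [N hN] := (lam_lim x).2 e e0.
by exists N => n Nn; apply: hN; exact: leq_trans Nn (cardJ n).
Qed.

Let reach_vequiv w y : (exists m, iter m (s w I) x = y) -> vequiv (s w) x y.
Proof. by move=> [m fmx]; exists I; split => //; [rewrite -fmx | exists m]. Qed.

Lemma ae_Delta_ge0 a :
  {ae P, forall w, (exists m, iter m (s w I) x = a) -> 0 <= Delta x a w}.
Proof.
have [aI|aNI] := boolP (a \in I); last first.
  by apply: aeW => w [m fmx]; move: aNI; rewrite -fmx orbit_mem.
set C := [set w | exists m, iter m (s w I) x = a].
have mC : measurable C := event_meas I (fun f => exists m, iter m f x = a).
apply: filterS (ae_le_of_cvg_in_probability P mC (measurable_cst (0 : R)) (Delta_lim x a).1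
  (fun n => measurable_cst (0 : R)) (k_ratio_meas a) (cvg_in_probability_cst P C 0)
  (k_ratio_cvg aI mC (@reach_vequiv ^~ a)) _) => [w|n w _]; first exact.
by rewrite /k_ratio divr_ge0.
Qed.

Lemma ae_Delta_first_return_le b :
  {ae P, forall w, b != x -> (exists m, iter m (s w I) x = b) ->
    Delta x (s w I x) w <= Delta x b w}.
Proof.
have [->|bx] := eqVneq b x; first exact: aeW.
have [bI|bNI] := boolP (b \in I); last first.
  by apply: aeW => w _ [m fmx]; move: bNI; rewrite -fmx orbit_mem.
have : {ae P, forall w a, s w I x = a -> (exists m, iter m (s w I) x = b) ->
    Delta x a w <= Delta x b w}.
  apply: ae_forall_countable => a.
  have [aI|aNI] := boolP (a \in I); last first.
    by apply: aeW => w sIx; move: aNI; rewrite -sIx -[s w I x]/(iter 1 _ x) orbit_mem.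
  set C := [set w | s w I x = a /\ exists m, iter m (s w I) x = b].
  have mC : measurable C := event_meas I (fun f => f x = a /\ exists m, iter m f x = b).
  have Cxa w : C w -> vequiv (s w) x a by move=> [sIx _]; apply: reach_vequiv; exists 1.
  have Cxb w : C w -> vequiv (s w) x b by move=> [_]; exact: reach_vequiv.
  apply: filterS (ae_le_of_cvg_in_probability P mC (Delta_lim x a).1 (Delta_lim x b).1
    (k_ratio_meas a) (k_ratio_meas b) (k_ratio_cvg aI mC Cxa) (k_ratio_cvg bI mC Cxb) _).
    by move=> w le sIx reach; exact: le.
  move=> n w [sIx [m fmx]]; rewrite /k_ratio ler_wpM2r ?invr_ge0 // ler_nat -sIx.
  have [m' fm'] := orbit_restriction_sub (s_vperm w) m (IJ n) xI.
  by apply: (kI_first_return (s_vperm w) (IJ n)) => //; exists m'; rewrite -fm'.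
by apply: filterS => w le _; exact: le.
Qed.

Lemma ae_Delta_le_lam b :
  {ae P, forall w, (exists m, iter m (s w I) x = b) -> Delta x b w <= lam x w}.
Proof.
have [bI|bNI] := boolP (b \in I); last first.
  by apply: aeW => w [m fmx]; move: bNI; rewrite -fmx orbit_mem.
set C := [set w | exists m, iter m (s w I) x = b].
have mC : measurable C := event_meas I (fun f => exists m, iter m f x = b).
apply: filterS (ae_le_of_cvg_in_probability P mC (Delta_lim x b).1 (lam_lim x).1
  (k_ratio_meas b) card_ratio_meas (k_ratio_cvg bI mC (@reach_vequiv ^~ b))
  (card_ratio_cvg mC) _) => [w|n w [m fmx]]; first exact.
have [m' fm'] := orbit_restriction_sub (s_vperm w) m (IJ n) xI.
rewrite /k_ratio /card_ratio ler_wpM2r ?invr_ge0 // ler_nat ltnW //.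
exact: (kI_lt_class_card (s_vperm w) (xJ n) (etrans (esym fm') fmx)).
Qed.

Lemma ae_Delta_first_return :
  {ae P, forall w, forall z, z != x -> (exists m, iter m (s w I) x = z) ->
    [/\ 0 <= Delta x (s w I x) w, Delta x (s w I x) w <= Delta x z w
       & Delta x z w <= lam x w]}.
Proof.
have ge0 := ae_forall_countable P ae_Delta_ge0.
have first_le := ae_forall_countable P ae_Delta_first_return_le.
have le_lam := ae_forall_countable P ae_Delta_le_lam.
near=> w => z zx reach.
have ge0_w : forall a, (exists m, iter m (s w I) x = a) -> 0 <= Delta x a w by near: w.
have first_le_w : forall b, b != x -> (exists m, iter m (s w I) x = b) ->
  Delta x (s w I x) w <= Delta x b w by near: w.
have le_lam_w : forall b, (exists m, iter m (s w I) x = b) -> Delta x b w <= lam x w.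
  by near: w.
by split; [apply: ge0_w; exists 1 | exact: first_le_w | exact: le_lam_w].
Unshelve. all: by end_near.
Qed.

End first_return_arcs.

Section first_point_on_circle.
Context {R : realType} {E : choiceType} {s : {fset E} -> E -> E} {l : nat -> R}
        {lam : E -> R} {Delta : E -> E -> R} {Xc : E -> option nat} {Xt : E -> R}
        {I : {fset E}} {x : E}.
Hypotheses (s_vperm : is_vperm s) (xI : x \in I).
Hypothesis X_fixed : forall y, Xc y = None <-> vfixed s y.
Hypothesis X_circle : forall y z, y != z ->
  (vequiv s y z <-> exists n, Xc y = Some n /\ Xc z = Some n) /\
  (forall n, Xc y = Some n -> Xc z = Some n -> lam y = l n /\ lam z = l n).
Hypothesis X_Delta : forall y z, y != z -> vequiv s y z ->
  exists k : int, Delta y z - (Xt z - Xt y) = k%:~R * lam y.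
Hypothesis X_range : forall y n, Xc y = Some n -> 0 <= Xt y < l n.
Hypothesis X_neq : forall y, y != x -> forall n, ~ (Xc x = Some n /\ Xc y = Some n /\ Xt x = Xt y).
Hypothesis Delta_bounds : forall z, z != x -> (exists m, iter m (s I) x = z) ->
  [/\ 0 <= Delta x (s I x), Delta x (s I x) <= Delta x z & Delta x z <= lam x].

Let sIx_vequiv : vequiv s x (s I x).
Proof. by exists I; split; [ | exact: (s_vperm.1 I).2.1 | exists 1]. Qed.

Lemma Xc_first_return {n} : Xc x = Some n -> Xc (s I x) = Some n.
Proof.
move=> Xxn; have [->//|sIx_x] := eqVneq (s I x) x.
have xa : x != s I x by rewrite eq_sym.
have [k [Xxk Xak]] := (X_circle x (s I x) xa).1.1 sIx_vequiv.
by rewrite Xak -Xxk.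
Qed.

Lemma ccw_first_return n : Xc x = Some n ->
  forall z, z \in I -> Xc z = Some n -> ccw (l n) (Xt x) (Xt (s I x)) <= ccw (l n) (Xt x) (Xt z).
Proof.
move=> Xxn z zI Xzn; set a := s I x.
have Xan := Xc_first_return Xxn.
have [->|zx] := eqVneq z x; first exact: ccw_le_ccw_self (X_range _ _ Xxn) (X_range _ _ Xan).
have xz : x != z by rewrite eq_sym.
have xz_equiv : vequiv s x z by apply: (X_circle _ _ xz).1.2; exists n.
have reach := vequiv_iter s_vperm xz_equiv xI zI.
have [ax|ax] := eqVneq a x.
  by move: reach => [m]; rewrite iter_fix // => zx'; move: zx; rewrite -zx' eqxx.
have [->|az] := eqVneq a z; first exact: lexx.
have xa : x != a by rewrite eq_sym.
have [Delta_a0 Delta_az Delta_zlam] := Delta_bounds _ zx reach.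
have [lamx _] := (X_circle _ _ xa).2 n Xxn Xan.
have lift_a : arc_lift (l n) (Xt x) (Xt a) (Delta x a).
  by rewrite /arc_lift -lamx; exact: X_Delta _ _ xa sIx_vequiv.
have lift_z : arc_lift (l n) (Xt x) (Xt z) (Delta x z).
  by rewrite /arc_lift -lamx; exact: X_Delta _ _ xz xz_equiv.
have Xa_neq : Xt a != Xt x.
  by apply/eqP => Xax; exact: X_neq _ ax n (conj Xxn (conj Xan (esym Xax))).
rewrite lamx in Delta_zlam.
exact: (ccw_le_of_arc_lifts (X_range _ _ Xxn) (X_range _ _ Xan) (X_range _ _ Xzn) Xa_neq
  Delta_a0 Delta_az Delta_zlam lift_a lift_z).
Qed.

Lemma first_return_on_circle :
  (Xc x = None -> s I x = x) /\
  (forall n, Xc x = Some n -> Xc (s I x) = Some n /\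
     forall z, z \in I -> Xc z = Some n ->
       ccw (l n) (Xt x) (Xt (s I x)) <= ccw (l n) (Xt x) (Xt z)).
Proof.
split => [/X_fixed fixed | n Xxn]; first exact: fixed I xI.
by split; [exact: Xc_first_return | exact: ccw_first_return].
Qed.

End first_point_on_circle.

Lemma exists_fsuperset {E : choiceType} : ~ finite_set [set: E] ->
  forall (I : {fset E}) n, exists J : {fset E}, fsubset I J /\ (n <= #|` J|)%N.
Proof.
move=> E_inf I; elim => [|n [J [IJ nJ]]]; first by exists I; rewrite fsubset_refl.
have [n_lt|_] := ltnP n #|` J|; first by exists J.
have [y yJ] : exists y, y \notin J.
  apply: contrapT => all_in; apply: E_inf; apply: (sub_finite_set _ (finite_fset J)).
  by move=> z _ /=; apply: contrapT => zJ; apply: all_in; exists z; apply/negP.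
exists (y |` J)%fset; split; first exact: fsubset_trans IJ (fsubsetUr _ _).
by rewrite cardfsU1 yJ add1n ltnS.
Qed.

Theorem proposition3p13
  (R : realType) (d : measure_display) (Omega : measurableType d)
  (P : probability Omega R) (E : countType)
  (l : nat -> R)
  (s : Omega -> {fset E} -> E -> E)
  (lam : E -> Omega -> R) (Delta : E -> E -> Omega -> R)
  (Xc : E -> Omega -> option nat) (Xt : E -> Omega -> R) :
  ~ finite_set [set: E] ->
  in_Lambda l ->
  (* sigma is a random virtual permutation with law P_l *)
  random_vperm s ->
  central P s ->
  is_lambda P s lam ->
  is_Delta P s Delta ->
  {ae P, forall w, forall n, lamk s lam n w = l n} ->
  (* (X_x) i.i.d. with law mu *)
  iid_mu P l Xc Xt ->
  {ae P, forall w, forall x, Xc x w = None <-> vfixed (s w) x} ->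
  {ae P, forall w, forall x y, x != y ->
     (vequiv (s w) x y <-> exists n, Xc x w = Some n /\ Xc y w = Some n) /\
     (forall n, Xc x w = Some n -> Xc y w = Some n ->
        lam x w = l n /\ lam y w = l n)} ->
  {ae P, forall w, forall x y, x != y -> vequiv (s w) x y ->
     exists z : int, Delta x y w - (Xt y w - Xt x w) = z%:~R * lam x w} ->
  forall (I : {fset E}) (x : E), x \in I ->
  {ae P, forall w,
     (Xc x w = None -> s w I x = x) /\
     (forall n, Xc x w = Some n ->
        Xc (s w I x) w = Some n /\
        forall z, z \in I -> Xc z w = Some n ->
          ccw (l n) (Xt x w) (Xt (s w I x) w) <= ccw (l n) (Xt x w) (Xt z w))}.
Proof.
move=> E_inf l_Lambda s_rand _ lam_lim Delta_lim _ X_iid X_fixed X_circle X_Delta I x xI.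
have [J /all_and2[IJ cardJ]] := choice (exists_fsuperset E_inf I).
have l_ge0 n : 0 <= l n by case/andP: (l_Lambda.1 n).
have X_range := ae_forall_countable P (ae_Xt_range P X_iid).
have X_neq : {ae P, forall w, forall y, y != x -> forall n,
    ~ (Xc x w = Some n /\ Xc y w = Some n /\ Xt x w = Xt y w)}.
  apply: ae_forall_countable => y; have [->|yx] := eqVneq y x; first exact: aeW.
  have xy : x != y by rewrite eq_sym.
  apply: filterS (ae_forall_countable P (fun n => ae_Xt_neq P X_iid x y n xy (l_ge0 n))).
  by move=> w neq _.
have Delta_bounds := ae_Delta_first_return P s_rand lam_lim Delta_lim IJ cardJ xI.
near=> w; apply: (first_return_on_circle (lam := lam ^~ w) (Delta := fun y z => Delta y z w)
  (s_rand.1 w) xI); near: w => //.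
Unshelve. all: by end_near.
Qed.
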